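(* Let $\varepsilon\ge0$ and assume the continuity assumption holds. Define $H:\mathbb{R}_+^{2K}\to\mathbb{R}$ by $$H(\lambda^{(1)},\lambda^{(2)})=\sum_{s\in\{-1,1\}}\mathbb{E}\left[\max_{k\in[K]}\big(\pi_sp_k(X,s)-s(\lambda^{(1)}_k-\lambda^{(2)}_k)\big)\,\Big|\,S=s\right]+\varepsilon\sum_{k=1}^K(\lambda^{(1)}_k+\lambda^{(2)}_k),$$ and let $(\lambda^{*(1)},\lambda^{*(2)})\in\arg\min_{\mathbb{R}_+^{2K}}H$. Then a classifier $g^*$ satisfies $g^*\in\arg\min_{g\in\mathcal{G}_{\varepsilon\text{-fair}}}\mathcal{R}(g)$ if and only if $g^*\in\arg\min_{g\in\mathcal{G}}\mathcal{R}_{\lambda^{*(1)},\lambda^{*(2)}}(g)$. Moreover, the classifier $$g^*_{\varepsilon\text{-fair}}(x,s)=\arg\max_{k\in[K]}\big(\pi_sp_k(x,s)-s(\lambda^{*(1)}_k-\lambda^{*(2)}_k)\big)$$ is an optimal $\varepsilon$-fair classifier.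
   Context: $(X,S,Y)\sim\mathbb{P}$, $X\in\mathcal{X}\subset\mathbb{R}^d$, $S\in\{-1,1\}$, $Y\in[K]$, $\pi_s=\mathbb{P}(S=s)>0$, $p_k(x,s)=\mathbb{P}(Y=k\mid X=x,S=s)$. $\mathcal{G}$ is the set of measurable classifiers $g:\mathcal{X}\times\{-1,1\}\to[K]$, with risk $\mathcal{R}(g)=\mathbb{P}(g(X,S)\ne Y)$. Writing $D_k(g)=\mathbb{P}(g(X,S)=k\mid S=1)-\mathbb{P}(g(X,S)=k\mid S=-1)$, $g$ is $\varepsilon$-fair ($g\in\mathcal{G}_{\varepsilon\text{-fair}}$) if $|D_k(g)|\le\varepsilon$ for all $k\in[K]$. The $\varepsilon$-fair-risk is $\mathcal{R}_{\lambda^{(1)},\lambda^{(2)}}(g)=\mathcal{R}(g)+\sum_k\lambda^{(1)}_k[D_k(g)-\varepsilon]+\sum_k\lambda^{(2)}_k[-D_k(g)-\varepsilon]$ for $\lambda^{(1)},\lambda^{(2)}\in\mathbb{R}_+^K$. Continuity assumption: for all $k\neq j$ and $s$, $t\mapsto\mathbb{P}(p_k(X,S)-p_j(X,S)\le t\mid S=s)$ is continuous. *)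

From HB Require Import structures.
From mathcomp Require Import all_boot all_order all_algebra.
From mathcomp Require Import all_classical all_reals all_analysis.
Set Implicit Arguments. Unset Strict Implicit. Unset Printing Implicit Defensive.
Import Order.TTheory GRing.Theory Num.Theory.
Import numFieldNormedType.Exports.
Local Open Scope classical_set_scope.
Local Open Scope ring_scope.

(* The sensitive attribute S takes values in {-1,1}, encoded by bool:
   true <-> S = 1, false <-> S = -1. *)
Definition sval (R : realType) (s : bool) : R := if s then 1 else -1.

Section FairDefs.
Variables (R : realType) (dO : measure_display) (Om : measurableType dO)
  (P : probability Om R) (dX : measure_display) (T : measurableType dX)
  (X : Om -> T) (S : Om -> bool) (K : nat) (Y : Om -> 'I_K).

Definition piS (s : bool) : R := fine (P [set w | S w = s]).

Definition classifier (g : T -> bool -> 'I_K) : Prop :=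
  forall (s : bool) (k : 'I_K), measurable [set x | g x s = k].

(* p is a version of the conditional probability P(Y = k | X = x, S = s). *)
Definition is_cond_prob (p : 'I_K -> T -> bool -> R) : Prop :=
  (forall k s, measurable_fun setT (fun x => p k x s)) /\
  (forall k x s, 0 <= p k x s) /\
  (forall x s, \sum_(k < K) p k x s = 1) /\
  (forall (A : set T) (k : 'I_K) (s : bool), measurable A ->
     P [set w | A (X w) /\ S w = s /\ Y w = k]
     = (\int[P]_(w in [set w | A (X w) /\ S w = s]) (p k (X w) s)%:E)%E).

Definition risk (g : T -> bool -> 'I_K) : R :=
  fine (P [set w | g (X w) (S w) <> Y w]).

Definition cond_pred (g : T -> bool -> 'I_K) (k : 'I_K) (s : bool) : R :=
  fine (P [set w | g (X w) (S w) = k /\ S w = s]) / piS s.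

Definition Dk (g : T -> bool -> 'I_K) (k : 'I_K) : R :=
  cond_pred g k true - cond_pred g k false.

Definition eps_fair (eps : R) (g : T -> bool -> 'I_K) : Prop :=
  forall k, `|Dk g k| <= eps.

Definition fair_risk (eps : R) (l1 l2 : 'I_K -> R) (g : T -> bool -> 'I_K) : R :=
  risk g + \sum_(k < K) l1 k * (Dk g k - eps)
         + \sum_(k < K) l2 k * (- Dk g k - eps).

Definition score (p : 'I_K -> T -> bool -> R) (l1 l2 : 'I_K -> R)
  (k : 'I_K) (x : T) (s : bool) : R :=
  piS s * p k x s - sval R s * (l1 k - l2 k).

(* E[ max_k score_k(X,s) | S = s ] = E[max_k ... ; S = s] / P(S = s) *)
Definition cond_exp_max (p : 'I_K -> T -> bool -> R) (l1 l2 : 'I_K -> R)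
  (s : bool) : R :=
  fine (\int[P]_(w in [set w | S w = s])
          (\big[maxe/-oo%E]_(k < K) (score p l1 l2 k (X w) s)%:E))%E / piS s.

Definition Hdual (eps : R) (p : 'I_K -> T -> bool -> R) (l1 l2 : 'I_K -> R) : R :=
  cond_exp_max p l1 l2 true + cond_exp_max p l1 l2 false
  + eps * \sum_(k < K) (l1 k + l2 k).

Definition continuity_assumption (p : 'I_K -> T -> bool -> R) : Prop :=
  forall (k j : 'I_K) (s : bool), k <> j ->
    continuous (fun t : R =>
      fine (P [set w | p k (X w) (S w) - p j (X w) (S w) <= t /\ S w = s])
      / piS s).

End FairDefs.

(* Write c = l1 - l2 and score_c(k, x, s) = pi_s p_k(x, s) - s c_k.  The
   definition of p as a conditional probability yields two identities:
(1)  fair_risk g = 1 - sum_s E[score_c(g(X,s), X, s); S = s] / pi_s - eps sum_k (l1_k + l2_k),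
(2)  H(l1, l2)   = sum_s E[max_k score_c(k, X, s); S = s] / pi_s + eps sum_k (l1_k + l2_k).
   Hence fair_risk g >= 1 - H(l1, l2) for every g (weak duality), with
   equality for every classifier picking a maximal score.  By the continuity
   assumption, near-ties between scores have vanishing probability, which
   gives one-sided derivatives of H in each coordinate; at a minimiser of H
   they yield the KKT conditions: the canonical argmax classifier is eps-fair
   and complementary slackness holds, so its risk is 1 - H, the optimal
   eps-fair risk.  The same tie estimates show that any classifier attaining
   the dual bound predicts each class with the canonical probabilities, hence
   has the same disparities D_k. *)

From Pilot Require Import Defs.
From HB Require Import structures.
From mathcomp Require Import all_boot all_order all_algebra.
From mathcomp Require Import all_classical all_reals all_analysis.
From mathcomp Require Import ring lra.
Import Order.TTheory GRing.Theory Num.Theory.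
Import numFieldNormedType.Exports.
Local Open Scope classical_set_scope.
Local Open Scope ring_scope.
Set Implicit Arguments. Unset Strict Implicit. Unset Printing Implicit Defensive.

Lemma in_bigsetU (U : Type) (I : eqType) (r : seq I) (A : I -> set U) x :
  (\big[setU/set0]_(j <- r) A j) x <-> (exists2 j, j \in r & A j x).
Proof.
elim: r => [|a r IH]; first by rewrite big_nil; split => // -[].
rewrite big_cons; split.
  move=> [Ha|/IH [j jr Hj]]; first by exists a; rewrite ?inE ?eqxx.
  by exists j; rewrite // inE jr orbT.
move=> [j]; rewrite inE => /orP[/eqP->|jr Hj]; first by left.
by right; apply/IH; exists j.
Qed.

Lemma in_bigsetI (U : Type) (I : eqType) (r : seq I) (A : I -> set U) x :
  (\big[setI/setT]_(j <- r) A j) x <-> (forall j, j \in r -> A j x).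
Proof.
elim: r => [|a r IH]; first by rewrite big_nil.
rewrite big_cons; split.
  by move=> [Ha /IH H] j; rewrite inE => /orP[/eqP->|/H].
move=> H; split; first by apply: H; rewrite inE eqxx.
by apply/IH => j jr; apply: H; rewrite inE jr orbT.
Qed.

Lemma measurable_bool d (U : measurableType d) (f : U -> bool) :
  measurable_fun setT f -> measurable [set x | f x].
Proof. by move=> mf; rewrite -[X in measurable X]setTI; apply: mf. Qed.

Lemma measurable_forall d (U : measurableType d) (K : nat) (A : 'I_K -> set U) :
  (forall j, measurable (A j)) -> measurable [set x | forall j, A j x].
Proof.
move=> mA; have -> : [set x | forall j, A j x] = \big[setI/setT]_(j < K) A j.
  apply/seteqP; split => x /=; first by move=> H; apply/in_bigsetI => j _; apply: H.
  by move/in_bigsetI => H j; apply: H; rewrite mem_index_enum.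
exact: bigsetI_measurable.
Qed.

Lemma eq_of_le_sum (R : numDomainType) (I : finType) (F G : I -> R) :
  (forall k, F k <= G k) -> \sum_k F k = \sum_k G k -> forall k, F k = G k.
Proof.
move=> FG Hs k; apply/eqP; rewrite eq_sym -subr_eq0; apply/eqP.
have H0 : \sum_k (G k - F k) = 0 by rewrite sumrB Hs subrr.
by apply: (psumr_eq0P _ H0) => // i _; rewrite subr_ge0.
Qed.

Lemma ge0_up_to_eps (R : realFieldType) (x C : R) :
  0 <= C -> (forall e, 0 < e -> 0 <= x + C * e) -> 0 <= x.
Proof.
move=> C0 H; rewrite leNgt; apply/negP => x0.
have C1 : 0 < C + 1 by rewrite ltr_wpDl.
have e0 : 0 < - x / (C + 1) by rewrite divr_gt0 // oppr_gt0.
have : C * (- x / (C + 1)) < - x.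
  by rewrite mulrA ltr_pdivrMr // mulrDr mulr1 mulrC ltrDl oppr_gt0.
have := H _ e0; lra.
Qed.

(* The maximum of a finite family of reals and its first (smallest-index)
   maximiser; breaking ties by index makes the maximiser a measurable
   function of the family. *)
Section FirstArgmax.
Variables (R : realDomainType) (K : nat) (k0 : 'I_K).
Implicit Types (f : 'I_K -> R).

Definition fmax f : R := \big[Order.max/f k0]_(j < K) f j.

Lemma le_fmax f j : f j <= fmax f.
Proof. exact: (le_bigmax _ f). Qed.

Lemma fmax_le f m : (forall j, f j <= m) -> fmax f <= m.
Proof. by move=> H; apply: bigmax_le => // j _; apply: H. Qed.

Lemma fmax_attained f : exists j, fmax f = f j.
Proof.
rewrite /fmax; apply: (big_ind (fun v => exists j, v = f j)).
- by exists k0.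
- by move=> a b [i ->] [j ->]; rewrite /Order.max; case: ifP => _; [exists j|exists i].
- by move=> j _; exists j.
Qed.

Definition is_first_argmax f (k : 'I_K) : bool :=
  [forall j, f j <= f k] && [forall j : 'I_K, (j < k)%N ==> (f j < f k)].

Definition first_argmax f : 'I_K := odflt k0 [pick k | is_first_argmax f k].

Lemma first_argmax_exists f : exists k, is_first_argmax f k.
Proof.
have [jm Hjm] := fmax_attained f.
have Pjm : [forall j, f j <= f jm] by apply/forallP => j; rewrite -Hjm le_fmax.
case: (@arg_minnP _ jm (fun i => [forall j, f j <= f i]) (fun i : 'I_K => i : nat) Pjm).
move=> i Pi Hmin; exists i; rewrite /is_first_argmax Pi /=.
apply/forallP => j; apply/implyP => ji.
have /forallP /(_ j) Pij := Pi.
rewrite lt_neqAle Pij andbT; apply/negP => /eqP Heq.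
have : [forall l, f l <= f j] by apply/forallP => l; move/forallP: Pi => /(_ l); rewrite Heq.
by move=> /Hmin; rewrite leqNgt ji.
Qed.

Lemma first_argmaxP f : is_first_argmax f (first_argmax f).
Proof.
rewrite /first_argmax; case: pickP => //= H; have [k Hk] := first_argmax_exists f.
by move: (H k); rewrite Hk.
Qed.

Lemma first_argmax_uniq f k k' :
  is_first_argmax f k -> is_first_argmax f k' -> k = k'.
Proof.
move=> /andP[/forallP A1 /forallP B1] /andP[/forallP A2 /forallP B2].
apply/val_inj => /=; case: (ltngtP k k') => // H.
- by move: (B2 k); rewrite H /= => /lt_le_trans /(_ (A1 k')); rewrite ltxx.
- by move: (B1 k'); rewrite H /= => /lt_le_trans /(_ (A2 k)); rewrite ltxx.
Qed.

Lemma first_argmax_eq f k : (first_argmax f == k) = is_first_argmax f k.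
Proof.
apply/eqP/idP => [<-|H]; first exact: first_argmaxP.
exact: first_argmax_uniq (first_argmaxP f) H.
Qed.

Lemma le_first_argmax f j : f j <= f (first_argmax f).
Proof. by have /andP[/forallP H _] := first_argmaxP f; apply: H. Qed.

Lemma fmax_first_argmax f : fmax f = f (first_argmax f).
Proof.
by apply/eqP; rewrite eq_le le_fmax andbT; apply: fmax_le => j; exact: le_first_argmax.
Qed.

End FirstArgmax.

Section MeasurableArgmax.
Variables (d : measure_display) (T : measurableType d) (R : realType) (K : nat)
  (k0 : 'I_K) (F : 'I_K -> T -> R).
Hypothesis mF : forall j, measurable_fun setT (F j).

Lemma measurable_fmax : measurable_fun setT (fun x => fmax k0 (F^~ x)).
Proof.
suff H r : measurable_fun setT (fun x => \big[Order.max/F k0 x]_(j <- r) F j x).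
  exact: H.
elim: r => [|j r IH]; first by under eq_fun do rewrite big_nil; exact: mF.
under eq_fun do rewrite big_cons.
exact: measurable_realfun.measurable_maxr.
Qed.

Lemma measurable_first_argmax k : measurable [set x | first_argmax k0 (F^~ x) = k].
Proof.
have -> : [set x | first_argmax k0 (F^~ x) = k] =
    [set x | forall j, F j x <= F k x] `&`
    [set x | forall j : 'I_K, [set x | (j < k)%N -> F j x < F k x] x].
  apply/seteqP; split => x /=.
  - move/eqP; rewrite first_argmax_eq => /andP[/forallP H1 /forallP H2]; split => // j.
    by move=> jk; have := H2 j; rewrite jk.
  - move=> [H1 H2]; apply/eqP; rewrite first_argmax_eq; apply/andP; split.
      by apply/forallP.
    by apply/forallP => j; apply/implyP; apply: H2.
apply: measurableI; apply: measurable_forall => j.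
  by apply: measurable_bool; apply: measurable_realfun.measurable_fun_ler.
case: (ltnP j k) => jk.
  rewrite (_ : [set _ | _] = [set x | F j x < F k x]).
    by apply: measurable_bool; apply: measurable_realfun.measurable_fun_ltr.
  by apply/seteqP; split => x /=; [apply|move=> H _].
rewrite (_ : [set _ | _] = [set: T]); first exact: measurableT.
by apply/seteqP; split => // x _ /=; rewrite ltnNge jk.
Qed.

End MeasurableArgmax.

Section RealProbability.
Variables (R : realType) (d : measure_display) (Om : measurableType d)
  (P : probability Om R).

Definition Pr (A : set Om) : R := fine (P A).

Lemma PrE A : measurable A -> P A = (Pr A)%:E.
Proof. by move=> mA; rewrite /Pr fineK// fin_num_measure. Qed.

Lemma Pr_ge0 A : 0 <= Pr A.
Proof. by rewrite /Pr fine_ge0. Qed.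

Lemma PrT : Pr setT = 1.
Proof. by rewrite /Pr probability_setT. Qed.

Lemma Pr_mono A B : measurable A -> measurable B -> A `<=` B -> Pr A <= Pr B.
Proof.
move=> mA mB AB; rewrite -lee_fin -!PrE//; apply: le_measure => //; rewrite inE//.
Qed.

Lemma Pr_setU A B : measurable A -> measurable B -> A `&` B = set0 ->
  Pr (A `|` B) = Pr A + Pr B.
Proof.
move=> mA mB AB; apply: EFin_inj; rewrite EFinD -!PrE ?measureU//; exact: measurableU.
Qed.

Lemma Pr_setU_le A B : measurable A -> measurable B -> Pr (A `|` B) <= Pr A + Pr B.
Proof.
by move=> mA mB; rewrite -lee_fin EFinD -!PrE //; [apply: measureU2|exact: measurableU].
Qed.

Lemma Pr_splitD A C : measurable A -> measurable C ->
  Pr A = Pr (A `&` C) + Pr (A `\` C).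
Proof.
move=> mA mC; rewrite -Pr_setU; [|exact: measurableI|exact: measurableD|].
  by rewrite setUIDK.
by rewrite setDE setIACA setICr setI0.
Qed.

Lemma Pr_bigsetU_le (I : eqType) (r : seq I) (F : I -> set Om) :
  (forall i, measurable (F i)) ->
  Pr (\big[setU/set0]_(i <- r) F i) <= \sum_(i <- r) Pr (F i).
Proof.
move=> mF; elim: r => [|a r IH]; first by rewrite !big_nil /Pr measure0.
rewrite !big_cons; apply: le_trans (Pr_setU_le _ _) _ => //.
  exact: bigsetU_measurable.
by rewrite lerD2l.
Qed.

Lemma bounded_integrable (f : Om -> R) M :
  measurable_fun setT f -> (forall w, `|f w| <= M) ->
  forall D, measurable D -> P.-integrable D (EFin \o f).
Proof.
move=> mf fM D mD; apply: measurable_bounded_integrable => //.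
- by rewrite -ge0_fin_numE// fin_num_measure.
- exact: measurable_funS mf.
rewrite /bounded_near; near=> N => w _ /=.
apply: le_trans (fM w) _; near: N; exact: nbhs_pinfty_ge (num_real _).
Unshelve. all: end_near. Qed.

Section BoundedIntegrand.
Variables (f : Om -> R) (M : R).
Hypotheses (mf : measurable_fun setT f) (fM : forall w, `|f w| <= M).

Lemma Rintegral_splitD A C : measurable A -> measurable C ->
  \int[P]_(x in A) f x = \int[P]_(x in A `&` C) f x + \int[P]_(x in A `\` C) f x.
Proof.
move=> mA mC; rewrite -Rintegral_setU; [|exact: measurableI|exact: measurableD| |].
- by rewrite setUIDK.
- apply: bounded_integrable fM _ _ => //.
  by apply: measurableU; [exact: measurableI|exact: measurableD].
- by apply/disj_set2P; rewrite setDE setIACA setICr setI0.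
Qed.

Lemma Rintegral_partition (I : finType) (D : set Om) (F : I -> set Om) :
  (forall k, measurable (F k)) -> (forall i j, i != j -> F i `&` F j = set0) ->
  D = \big[setU/set0]_(k <- index_enum I) F k ->
  \int[P]_(w in D) f w = \sum_k \int[P]_(w in F k) f w.
Proof.
move=> mF dF ->; rewrite {1}/Rintegral integral_bigsetU_EFin //.
- rewrite (_ : (\sum_(k <- _) _)%E = (\sum_k \int[P]_(w in F k) f w)%:E) //.
  rewrite -sumEFin; apply: eq_bigr => k _.
  by rewrite /Rintegral fineK// integrable_fin_num// (bounded_integrable mf fM).
- exact: index_enum_uniq.
- by apply/trivIsetP => i j _ _; apply: dF.
- by apply/measurable_realfun.measurable_EFinP; exact: measurable_funS mf.
Qed.

Lemma Rintegral_le_split A C (a b : R) : measurable A -> measurable C ->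
  (forall w, A w -> C w -> f w <= a) -> (forall w, A w -> ~ C w -> f w <= b) ->
  \int[P]_(w in A) f w <= a * Pr (A `&` C) + b * Pr (A `\` C).
Proof.
move=> mA mC H1 H2.
have mAC : measurable (A `&` C) by exact: measurableI.
have mAD : measurable (A `\` C) by exact: measurableD.
rewrite (Rintegral_splitD mA mC) -!Rintegral_cst //; apply: lerD; apply: le_Rintegral => //.
- exact: bounded_integrable mf fM _ _.
- exact: finite_measure_integrable_cst.
- by move=> w [? ?]; apply: H1.
- exact: bounded_integrable mf fM _ _.
- exact: finite_measure_integrable_cst.
- by move=> w [? ?]; apply: H2.
Qed.

Lemma Rintegral_ge_split A C (a b : R) : measurable A -> measurable C ->
  (forall w, A w -> C w -> a <= f w) -> (forall w, A w -> ~ C w -> b <= f w) ->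
  a * Pr (A `&` C) + b * Pr (A `\` C) <= \int[P]_(w in A) f w.
Proof.
move=> mA mC H1 H2.
have mAC : measurable (A `&` C) by exact: measurableI.
have mAD : measurable (A `\` C) by exact: measurableD.
rewrite (Rintegral_splitD mA mC) -!Rintegral_cst //; apply: lerD; apply: le_Rintegral => //.
- exact: finite_measure_integrable_cst.
- exact: bounded_integrable mf fM _ _.
- by move=> w [? ?]; apply: H1.
- exact: finite_measure_integrable_cst.
- exact: bounded_integrable mf fM _ _.
- by move=> w [? ?]; apply: H2.
Qed.

End BoundedIntegrand.

Lemma Pr_partition (I : finType) (D : set Om) (F : I -> set Om) :
  measurable D ->
  (forall k, measurable (F k)) -> (forall i j, i != j -> F i `&` F j = set0) ->
  D = \big[setU/set0]_(k <- index_enum I) F k ->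
  Pr D = \sum_k Pr (F k).
Proof.
move=> mD mF dF HD.
have Pr_int A : measurable A -> Pr A = \int[P]_(w in A) (fun=> 1 : R) w.
  by move=> mA; rewrite Rintegral_cst// mul1r.
have one_bd (w : Om) : `|(fun=> 1 : R) w| <= 1 by rewrite normr1.
rewrite Pr_int// (Rintegral_partition (measurable_cst _) one_bd mF dF HD).
by apply: eq_bigr => k _; rewrite Pr_int.
Qed.

End RealProbability.

(* The data of the theorem.  The class k0 only serves as the default value of
   finite maxima over 'I_K (the sample space is nonempty, so K > 0). *)
Section Model.
Variables (R : realType) (dO : measure_display) (Om : measurableType dO)
  (P : probability Om R) (dX : measure_display) (T : measurableType dX)
  (X : Om -> T) (S : Om -> bool) (K : nat) (Y : Om -> 'I_K)
  (p : 'I_K -> T -> bool -> R) (k0 : 'I_K).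
Hypotheses (mX : measurable_fun setT X)
  (mS : forall s : bool, measurable [set w | S w = s])
  (mY : forall k : 'I_K, measurable [set w | Y w = k])
  (pi0 : forall s : bool, 0 < piS P S s)
  (cp : is_cond_prob P X S Y p)
  (cont : continuity_assumption P X S p).

Local Notation pis := (piS P S).
Local Notation Pr := (Pr P).

Lemma p_ge0 k x s : 0 <= p k x s.
Proof. by case: cp => _ [H _]. Qed.

Lemma p_le1 k x s : p k x s <= 1.
Proof.
case: cp => _ [_ [H _]]; rewrite -(H x s) (bigD1 k)//= lerDl.
by apply: sumr_ge0 => i _; exact: p_ge0.
Qed.

Lemma measurable_p k s : measurable_fun setT (fun x => p k x s).
Proof. by case: cp => H _; apply: H. Qed.

(* The score of class k when the multipliers enter only through their
   difference c = l1 - l2; [score P S p l1 l2] is [scorec (l1 - l2)]. *)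
Definition scorec (c : 'I_K -> R) (k : 'I_K) (x : T) (s : bool) : R :=
  pis s * p k x s - Defs.sval R s * c k.

Definition maxscore c x s : R := fmax k0 (fun k => scorec c k x s).

Definition argmax_cls c : T -> bool -> 'I_K :=
  fun x s => first_argmax k0 (fun k => scorec c k x s).

Lemma le_maxscore c x s j : scorec c j x s <= maxscore c x s.
Proof. exact: le_fmax. Qed.

Lemma le_argmax c x s j : scorec c j x s <= scorec c (argmax_cls c x s) x s.
Proof. exact: (le_first_argmax k0 (fun k => scorec c k x s)). Qed.

Lemma maxscore_argmax c x s : maxscore c x s = scorec c (argmax_cls c x s) x s.
Proof. exact: fmax_first_argmax. Qed.

Lemma measurable_scorec c k s : measurable_fun setT (fun x => scorec c k x s).
Proof.
apply: measurable_realfun.measurable_funB; last exact: measurable_cst.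
apply: measurable_realfun.measurable_funM; [exact: measurable_cst|exact: measurable_p].
Qed.

Lemma argmax_classifier c : classifier (argmax_cls c).
Proof.
by move=> s k; apply: measurable_first_argmax => j; exact: measurable_scorec.
Qed.

Lemma measurable_scoreX c k s : measurable_fun setT (fun w => scorec c k (X w) s).
Proof. exact: measurableT_comp (measurable_scorec c k s) mX. Qed.

Lemma measurable_maxscoreX c s : measurable_fun setT (fun w => maxscore c (X w) s).
Proof.
exact: measurableT_comp (measurable_fmax k0 (fun j => measurable_scorec c j s)) mX.
Qed.

(* Scores are uniformly bounded, so all integrals below are of bounded
   measurable functions. *)
Definition score_bound (c : 'I_K -> R) s := pis s + \sum_j `|c j|.

Lemma scorec_bound c k x s : `|scorec c k x s| <= score_bound c s.
Proof.
rewrite /scorec /score_bound; apply: (le_trans (ler_normB _ _)); apply: lerD.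
  rewrite normrM (ger0_norm (ltW (pi0 s))) (ger0_norm (p_ge0 _ _ _)).
  rewrite -[X in _ <= X]mulr1; apply: ler_wpM2l; [exact: ltW|exact: p_le1].
rewrite normrM (_ : `|Defs.sval R s| = 1); last by case: s; rewrite /Defs.sval ?normrN normr1.
rewrite mul1r (bigD1 k)//= lerDl; apply: sumr_ge0 => *; exact: normr_ge0.
Qed.

Lemma maxscore_bound c x s : `|maxscore c x s| <= score_bound c s.
Proof. by rewrite maxscore_argmax; exact: scorec_bound. Qed.

Definition pred_set (g : T -> bool -> 'I_K) k s := [set w | g (X w) (S w) = k /\ S w = s].

Definition hit_set (g : T -> bool -> 'I_K) k s :=
  [set w | g (X w) (S w) = k /\ S w = s /\ Y w = k].

Lemma measurable_pred_set g k s : classifier g -> measurable (pred_set g k s).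
Proof.
move=> cg; have -> : pred_set g k s = (X @^-1` [set x | g x s = k]) `&` [set w | S w = s].
  by apply/seteqP; split => w /= [H1 H2]; split => //; move: H1; rewrite H2.
apply: measurableI => //; rewrite -[X in measurable X]setTI; exact: mX.
Qed.

Lemma measurable_hit_set g k s : classifier g -> measurable (hit_set g k s).
Proof.
move=> cg; have -> : hit_set g k s = pred_set g k s `&` [set w | Y w = k].
  by apply/seteqP; split => w /=; [move=> [H1 [H2 H3]]|move=> [[H1 H2] H3]].
exact: measurableI (measurable_pred_set _ _ cg) (mY k).
Qed.

Lemma pred_set_disj g s i j : i != j -> pred_set g i s `&` pred_set g j s = set0.
Proof.
move=> ij; apply/seteqP; split => // w [[H1 _] [H2 _]].
by move: ij; rewrite -H1 -H2 eqxx.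
Qed.

Lemma pred_set_cover g s :
  [set w | S w = s] = \big[setU/set0]_(k <- index_enum 'I_K) pred_set g k s.
Proof.
apply/seteqP; split => w /=.
  by move=> Sw; apply/in_bigsetU; exists (g (X w) (S w)); rewrite ?mem_index_enum.
by move/in_bigsetU => [k _ [_ H]].
Qed.

Lemma Pr_pred_sets g s : classifier g -> Pr [set w | S w = s] = \sum_k Pr (pred_set g k s).
Proof.
move=> cg; apply: (Pr_partition _ (mS s) _ _ (pred_set_cover g s)).
- by move=> k; exact: measurable_pred_set.
- exact: pred_set_disj.
Qed.

Lemma Rintegral_pred_sets g (f : Om -> R) M s : classifier g ->
  measurable_fun setT f -> (forall w, `|f w| <= M) ->
  \int[P]_(w in [set w | S w = s]) f w = \sum_k \int[P]_(w in pred_set g k s) f w.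
Proof.
move=> cg mf fM; apply: (Rintegral_partition P mf fM _ _ (pred_set_cover g s)).
- by move=> k; exact: measurable_pred_set.
- exact: pred_set_disj.
Qed.

Lemma Pr_hit_set g k s : classifier g ->
  Pr (hit_set g k s) = \int[P]_(w in pred_set g k s) p k (X w) s.
Proof.
move=> cg; case: cp => _ [_ [_ H]].
have := H [set x | g x s = k] k s (cg s k).
have -> : [set w | [set x | g x s = k] (X w) /\ S w = s /\ Y w = k] = hit_set g k s.
  apply/seteqP; split => w /= [H1 [H2 H3]]; (split; last by []); by [rewrite H2|rewrite -H2].
have -> : [set w | [set x | g x s = k] (X w) /\ S w = s] = pred_set g k s.
  apply/seteqP; split => w /= [H1 H2]; (split; last by []); by [rewrite H2|rewrite -H2].
by rewrite /Pr /Rintegral => ->.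
Qed.

Lemma risk_hits g : classifier g ->
  risk P X S Y g = 1 - \sum_k (Pr (hit_set g k true) + Pr (hit_set g k false)).
Proof.
move=> cg.
pose F k := hit_set g k true `|` hit_set g k false.
have mF k : measurable (F k) by apply: measurableU; exact: measurable_hit_set.
have Hc : [set w | g (X w) (S w) = Y w] = \big[setU/set0]_(k <- index_enum 'I_K) F k.
  apply/seteqP; split => w /=.
    move=> H; apply/in_bigsetU; exists (Y w); rewrite ?mem_index_enum //.
    by rewrite /F /hit_set /=; case E: (S w); [left|right]; rewrite -E.
  move/in_bigsetU => [k _]; rewrite /F /hit_set /=.
  by move=> -[[H1 [_ H3]]|[H1 [_ H3]]]; rewrite H1 H3.
have mG : measurable [set w | g (X w) (S w) = Y w].
  by rewrite Hc; apply: bigsetU_measurable => k _; exact: mF.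
have -> : risk P X S Y g = 1 - Pr [set w | g (X w) (S w) = Y w].
  rewrite /risk -/(Pr _) -(PrT P) (Pr_splitD _ measurableT mG) setTI.
  rewrite (_ : [set: Om] `\` _ = [set w | g (X w) (S w) <> Y w]); first by ring.
  by apply/seteqP; split => w /=; [move=> [_ H]|move=> H; split].
congr (_ - _); rewrite (Pr_partition _ mG mF _ Hc).
  apply: eq_bigr => k _; rewrite Pr_setU //; try exact: measurable_hit_set.
  by apply/seteqP; split => // w /= [[_ [H1 _]] [_ [H2 _]]]; move: H1; rewrite H2.
move=> i j ij; apply/seteqP; split => // w /= [Hi Hj].
by move: ij; case: Hi => -[H1 [_ H3]]; case: Hj => -[H1' [_ H3']]; rewrite -H3 -H3' eqxx.
Qed.

(* The part of the fair risk that depends on the classifier g: the expected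
   score of the class picked by g on {S = s}.  Its pointwise upper bound is
   the expected maximal score, which is what the dual function H integrates. *)
Definition picked_int g c s := \sum_k \int[P]_(w in pred_set g k s) scorec c k (X w) s.

Definition max_int c s := \int[P]_(w in [set w | S w = s]) maxscore c (X w) s.

Definition primal_part g c := picked_int g c true / pis true + picked_int g c false / pis false.

Definition dual_part c := max_int c true / pis true + max_int c false / pis false.

Lemma Rintegral_picked_score g c k s : classifier g ->
  \int[P]_(w in pred_set g k s) scorec c k (X w) s =
  pis s * Pr (hit_set g k s) - Defs.sval R s * c k * Pr (pred_set g k s).
Proof.
move=> cg; have mA := measurable_pred_set k s cg.
have ip : P.-integrable (pred_set g k s) (EFin \o (fun w => p k (X w) s)).
  apply: (@bounded_integrable _ _ _ _ _ 1) => // [|w].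
    exact: measurableT_comp (measurable_p k s) mX.
  by rewrite ger0_norm ?p_le1 ?p_ge0.
rewrite /scorec RintegralB //.
- by rewrite RintegralZl // -Pr_hit_set // Rintegral_cst.
- by apply: (eq_integrable mA _ _ _ (integrableZl mA (pis s) ip)) => w _.
- exact: finite_measure_integrable_cst.
Qed.

Lemma fair_risk_decomp g (l1 l2 : 'I_K -> R) eps : classifier g ->
  fair_risk P X S Y eps l1 l2 g =
  1 - primal_part g (fun k => l1 k - l2 k) - eps * \sum_k (l1 k + l2 k).
Proof.
move=> cg.
have picked s : picked_int g (fun k => l1 k - l2 k) s = \sum_k (pis s * Pr (hit_set g k s) -
   Defs.sval R s * (l1 k - l2 k) * Pr (pred_set g k s)).
  by apply: eq_bigr => k _; exact: Rintegral_picked_score.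
have lhs_sum (F G H : 'I_K -> R) :
    1 - \sum_k F k + \sum_k G k + \sum_k H k = 1 + \sum_k (- F k + G k + H k).
  by rewrite !big_split /= sumrN; ring.
have rhs_sum (U V W : 'I_K -> R) (a b : R) :
    1 - ((\sum_k U k) / a + (\sum_k V k) / b) - eps * \sum_k W k =
    1 + \sum_k (- (U k / a) - V k / b - eps * W k).
  by rewrite !big_split /= !sumrN -!mulr_suml -mulr_sumr; ring.
rewrite /fair_risk risk_hits // /primal_part !picked lhs_sum rhs_sum.
congr (_ + _); apply: eq_bigr => k _.
rewrite /Dk /cond_pred /Defs.sval -!/(Pr _).
have := pi0 true; have := pi0 false => h1 h2.
field; apply/andP; split; exact: lt0r_neq0.
Qed.

Lemma bigmaxe_maxscore c x s :
  (\big[maxe/-oo%E]_(k < K) (scorec c k x s)%:E)%E = (maxscore c x s)%:E.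
Proof.
apply/eqP; rewrite eq_le; apply/andP; split.
- by apply: bigmax_le => [|k _]; rewrite ?leNye // lee_fin le_maxscore.
- by rewrite maxscore_argmax; exact: (le_bigmax _ (fun k => (scorec c k x s)%:E)).
Qed.

Lemma Hdual_decomp eps (l1 l2 : 'I_K -> R) :
  Hdual P X S eps p l1 l2 = dual_part (fun k => l1 k - l2 k) + eps * \sum_k (l1 k + l2 k).
Proof.
rewrite /Hdual /cond_exp_max /dual_part /max_int /Rintegral.
by congr (_ / _ + _ / _ + _); congr fine; apply: eq_integral => w _; rewrite bigmaxe_maxscore.
Qed.

Lemma picked_le_max g c s : classifier g -> picked_int g c s <= max_int c s.
Proof.
move=> cg; rewrite /max_int (Rintegral_pred_sets _ cg (measurable_maxscoreX c s)
  (fun w => maxscore_bound c (X w) s)).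
apply: ler_sum => k _; apply: le_Rintegral.
- exact: measurable_pred_set.
- apply: (bounded_integrable P (measurable_scoreX c k s) (fun w => scorec_bound c k (X w) s)).
  exact: measurable_pred_set.
- apply: (bounded_integrable P (measurable_maxscoreX c s) (fun w => maxscore_bound c (X w) s)).
  exact: measurable_pred_set.
- by move=> w _; exact: le_maxscore.
Qed.

Lemma picked_eq_max g c s : classifier g ->
  (forall x k, scorec c k x s <= scorec c (g x s) x s) -> picked_int g c s = max_int c s.
Proof.
move=> cg gmax; rewrite /max_int (Rintegral_pred_sets _ cg (measurable_maxscoreX c s)
  (fun w => maxscore_bound c (X w) s)).
apply: eq_bigr => k _; apply: eq_Rintegral => w; rewrite inE /pred_set /= => -[gk Sw].
have {}gk : g (X w) s = k by rewrite -Sw.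
by apply/eqP; rewrite eq_le le_maxscore /=; apply: fmax_le => j; rewrite -gk; exact: gmax.
Qed.

Lemma primal_le_dual g c : classifier g -> primal_part g c <= dual_part c.
Proof.
move=> cg; rewrite /primal_part /dual_part.
by apply: lerD; rewrite ler_pM2r ?invr_gt0 //; exact: picked_le_max.
Qed.

Lemma weak_duality g (l1 l2 : 'I_K -> R) eps : classifier g ->
  1 - Hdual P X S eps p l1 l2 <= fair_risk P X S Y eps l1 l2 g.
Proof.
move=> cg; rewrite fair_risk_decomp // Hdual_decomp.
have := primal_le_dual (fun k => l1 k - l2 k) cg; lra.
Qed.

Lemma fair_risk_maximiser g (l1 l2 : 'I_K -> R) eps : classifier g ->
  (forall x s k, scorec (fun k => l1 k - l2 k) k x s <=
                 scorec (fun k => l1 k - l2 k) (g x s) x s) ->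
  fair_risk P X S Y eps l1 l2 g = 1 - Hdual P X S eps p l1 l2.
Proof.
move=> cg gmax; rewrite fair_risk_decomp // Hdual_decomp /primal_part /dual_part.
by rewrite !(picked_eq_max cg) //; [ring|move=> x k; exact: gmax..].
Qed.

Lemma fair_risk_argmax (l1 l2 : 'I_K -> R) eps :
  fair_risk P X S Y eps l1 l2 (argmax_cls (fun k => l1 k - l2 k)) = 1 - Hdual P X S eps p l1 l2.
Proof.
apply: fair_risk_maximiser (argmax_classifier _) _ => x s k; exact: le_argmax.
Qed.

Definition tie_set c s a b t := [set w | S w = s /\ a != b /\
  scorec c a (X w) s - t < scorec c b (X w) s /\ scorec c b (X w) s <= scorec c a (X w) s].

Lemma measurable_tie_set c s a b t : measurable (tie_set c s a b t).
Proof.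
have [ab|nab] := eqVneq a b.
  rewrite (_ : tie_set c s a b t = set0) //; apply/seteqP; split => // w.
  by rewrite /tie_set /= ab eqxx => -[_ []].
have -> : tie_set c s a b t = [set w | S w = s] `&`
   ([set w | scorec c a (X w) s - t < scorec c b (X w) s] `&`
    [set w | scorec c b (X w) s <= scorec c a (X w) s]).
  by apply/seteqP; split => w /=; [move=> [? [_ [? ?]]]|move=> [? [? ?]]].
apply: measurableI => //; apply: measurableI; apply: measurable_bool.
- apply: measurable_realfun.measurable_fun_ltr; last exact: measurable_scoreX.
  by apply: measurable_realfun.measurable_funB; [exact: measurable_scoreX|exact: measurable_cst].
- by apply: measurable_realfun.measurable_fun_ler; exact: measurable_scoreX.
Qed.

(* The event {p_b - p_a <= y, S = s}, whose conditional probability is the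
   distribution function of the continuity assumption. *)
Definition cdf_set a b s y := [set w | p b (X w) (S w) - p a (X w) (S w) <= y /\ S w = s].

Lemma measurable_cdf_set a b s y : measurable (cdf_set a b s y).
Proof.
have -> : cdf_set a b s y = [set w | p b (X w) s - p a (X w) s <= y] `&` [set w | S w = s].
  by apply/seteqP; split => w /= [H1 H2]; split => //; move: H1; rewrite H2.
apply: measurableI => //; apply: measurable_bool; apply: measurable_realfun.measurable_fun_ler.
  by apply: measurable_realfun.measurable_funB; exact: measurableT_comp (measurable_p _ s) mX.
exact: measurable_cst.
Qed.

(* A band of near-ties of width t is a band of the distribution function of
   p_b - p_a of width t / pi_s, ending at a point fixed by c. *)
Definition tie_point (c : 'I_K -> R) s (a b : 'I_K) := Defs.sval R s * (c b - c a) / pis s.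

Lemma tie_set_sub_band c s a b t : 0 < t ->
  let z := tie_point c s a b in
  tie_set c s a b t `<=` cdf_set a b s z `\` cdf_set a b s (z - t / pis s).
Proof.
move=> t0 z w [Sw [_ [H1 H2]]]; have pi0s := pi0 s; rewrite /cdf_set /= Sw; split.
  split => //; rewrite /z /tie_point ler_pdivlMr //; move: H2; rewrite /scorec; lra.
move=> [H3 _]; move: H3; rewrite /z /tie_point -mulrBl ler_pdivlMr //.
move: H1; rewrite /scorec; lra.
Qed.

Lemma Pr_cdf_band a b s y y' : y' <= y ->
  Pr (cdf_set a b s y `\` cdf_set a b s y') =
  pis s * (Pr (cdf_set a b s y) / pis s - Pr (cdf_set a b s y') / pis s).
Proof.
move=> y'y; have pi0s := pi0 s.
have inter : cdf_set a b s y `&` cdf_set a b s y' = cdf_set a b s y'.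
  apply/seteqP; split => w /=; first by move=> [].
  by move=> [H1 H2]; do 2!split => //; apply: le_trans H1 y'y.
have := Pr_splitD P (measurable_cdf_set a b s y) (measurable_cdf_set a b s y').
by rewrite inter => ->; field; exact: lt0r_neq0.
Qed.

(* Continuity assumption: near-ties of vanishing width have vanishing probability. *)
Lemma tie_set_small c s a b eta : 0 < eta ->
  \forall t \near 0^'+, Pr (tie_set c s a b t) <= eta.
Proof.
move=> eta0.
have [ab|nab] := eqVneq a b.
  near=> t; rewrite (_ : tie_set c s a b t = set0); first by rewrite /Pr measure0 /= ltW.
  by apply/seteqP; split => // w; rewrite /tie_set /= ab eqxx => -[_ []].
have pi0s := pi0 s.
pose z := tie_point c s a b.
have ba : b <> a by move=> E; move: nab; rewrite E eqxx.
have := @cont b a s ba z.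
move/cvgrPdist_lt => /(_ (eta / pis s) (divr_gt0 eta0 pi0s)) /nbhs_ballP [e /= e0 He].
near=> t.
have t0 : 0 < t by near: t; exact: nbhs_right_gt.
have te : t < e * pis s by near: t; apply: nbhs_right_lt; rewrite mulr_gt0.
have close : `|Pr (cdf_set a b s z) / pis s - Pr (cdf_set a b s (z - t / pis s)) / pis s|
    < eta / pis s.
  apply: He; rewrite -ball_normE /ball_ /= opprB addrC subrK ger0_norm ?divr_ge0 ?ltW //.
  by rewrite ltr_pdivrMr.
apply: le_trans (Pr_mono P (measurable_tie_set _ _ _ _ _) _ (tie_set_sub_band (c:=c) (s:=s) (a:=a) (b:=b) t0)) _.
  by apply: measurableD; exact: measurable_cdf_set.
rewrite Pr_cdf_band; last by rewrite gerBl divr_ge0 ?ltW.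
rewrite -(@ler_pM2l _ (pis s)^-1) ?invr_gt0 // mulrA mulVf ?lt0r_neq0 // mul1r.
by rewrite [X in _ <= X]mulrC; apply: (le_trans (ler_norm _)); apply: ltW.
Unshelve. all: end_near. Qed.

(* One-sided variations of max_int when a single score is moved by t > 0:
   raising score k gains at most t on {argmax = k} plus the near-ties in
   which k was at most t behind; lowering it loses at least t on
   {argmax = k} minus the near-ties in which k was at most t ahead. *)
Lemma measurable_maxscore_diff c c' s :
  measurable_fun setT (fun w => maxscore c' (X w) s - maxscore c (X w) s).
Proof. by apply: measurable_realfun.measurable_funB; exact: measurable_maxscoreX. Qed.

Lemma maxscore_diff_bound c c' s w :
  `|maxscore c' (X w) s - maxscore c (X w) s| <= score_bound c' s + score_bound c s.
Proof. by apply: (le_trans (ler_normB _ _)); apply: lerD; exact: maxscore_bound. Qed.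

Lemma max_int_diff c c' s : max_int c' s - max_int c s =
  \int[P]_(w in [set w | S w = s]) (maxscore c' (X w) s - maxscore c (X w) s).
Proof.
rewrite /max_int RintegralB //.
- exact: (bounded_integrable P (measurable_maxscoreX c' s) (fun w => maxscore_bound c' (X w) s)) (mS s).
- exact: (bounded_integrable P (measurable_maxscoreX c s) (fun w => maxscore_bound c (X w) s)) (mS s).
Qed.

Lemma max_int_raise c c' k s t : 0 < t ->
  (forall x, scorec c' k x s = scorec c k x s + t) ->
  (forall j x, j != k -> scorec c' j x s = scorec c j x s) ->
  max_int c' s - max_int c s <=
  t * Pr (pred_set (argmax_cls c) k s) + t * \sum_j Pr (tie_set c s j k t).
Proof.
move=> t0 Hk Hj.
pose Cup := [set w | maxscore c (X w) s < scorec c k (X w) s + t].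
have mCup : measurable Cup.
  apply: measurable_bool; apply: measurable_realfun.measurable_fun_ltr.
    exact: measurable_maxscoreX.
  by apply: measurable_realfun.measurable_funD; [exact: measurable_scoreX|exact: measurable_cst].
have gain_le_t x : maxscore c' x s <= maxscore c x s + t.
  apply: fmax_le => j; have [->|jk] := eqVneq j k; first by rewrite Hk lerD2r le_maxscore.
  by rewrite Hj // (le_trans (le_maxscore c x s j)) // lerDl ltW.
have no_gain x : scorec c k x s + t <= maxscore c x s -> maxscore c' x s <= maxscore c x s.
  move=> H; apply: fmax_le => j; have [->|jk] := eqVneq j k; first by rewrite Hk.
  by rewrite Hj // le_maxscore.
rewrite max_int_diff.
apply: le_trans (Rintegral_le_split (a := t) (b := 0) P (measurable_maxscore_diff c c' s)
  (maxscore_diff_bound c c' s) (mS s) mCup _ _) _.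
- by move=> w _ _; have := gain_le_t (X w); lra.
- by move=> w _ /negP; rewrite -leNgt => /no_gain; lra.
rewrite mul0r addr0 -mulrDr; apply: ler_wpM2l; first exact: ltW.
have mA := measurable_pred_set k s (argmax_classifier c).
have mB : measurable (\big[setU/set0]_(j <- index_enum 'I_K) tie_set c s j k t).
  by apply: bigsetU_measurable => j _; exact: measurable_tie_set.
have sub : [set w | S w = s] `&` Cup `<=`
    pred_set (argmax_cls c) k s `|` \big[setU/set0]_(j <- index_enum 'I_K) tie_set c s j k t.
  move=> w [Sw Hw]; have [E|jk] := eqVneq (argmax_cls c (X w) s) k.
    by left; split => //; rewrite Sw.
  right; apply/in_bigsetU; exists (argmax_cls c (X w) s); first exact: mem_index_enum.
  split => //; split => //; rewrite -maxscore_argmax; split; last exact: le_maxscore.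
  by move: Hw; rewrite /Cup /=; lra.
apply: le_trans (Pr_mono P (measurableI _ _ (mS s) mCup) (measurableU _ _ mA mB) sub) _.
apply: le_trans (Pr_setU_le P mA mB) _; rewrite lerD2l.
by apply: Pr_bigsetU_le => j; exact: measurable_tie_set.
Qed.

Definition clear_win c s k t :=
  [set w | forall j : 'I_K, [set w | j != k -> scorec c j (X w) s <= scorec c k (X w) s - t] w].

Lemma measurable_clear_win c s k t : measurable (clear_win c s k t).
Proof.
apply: measurable_forall => j; have [->|jk] := eqVneq j k.
  rewrite (_ : [set _ | _] = [set: Om]); first exact: measurableT.
  by apply/seteqP; split => // w _ /=; rewrite eqxx.
rewrite (_ : [set _ | _] = [set w | scorec c j (X w) s <= scorec c k (X w) s - t]).
  apply: measurable_bool; apply: measurable_realfun.measurable_fun_ler.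
    exact: measurable_scoreX.
  by apply: measurable_realfun.measurable_funB; [exact: measurable_scoreX|exact: measurable_cst].
by apply/seteqP; split => w /=; [apply|move=> H _].
Qed.

Lemma argmax_sub_clear_win c s k t :
  pred_set (argmax_cls c) k s `<=`
  ([set w | S w = s] `&` clear_win c s k t) `|`
  \big[setU/set0]_(j <- index_enum 'I_K) tie_set c s k j t.
Proof.
move=> w [Hg Sw]; rewrite Sw in Hg.
have [HC|HC] := pselect (clear_win c s k t w); first by left.
right; apply/in_bigsetU.
have [j Hj] : exists j : 'I_K,
    ~ (j != k -> scorec c j (X w) s <= scorec c k (X w) s - t).
  by apply: contrapT => H; apply: HC => j; apply: contrapT => Hn; apply: H; exists j.
exists j; first exact: mem_index_enum.
have jk : j != k by apply/negP => /eqP E; apply: Hj; rewrite E eqxx.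
split => //; split; first by rewrite eq_sym.
have hm : scorec c j (X w) s <= scorec c k (X w) s by rewrite -Hg; exact: le_argmax.
split => //; apply: contrapT => Hn; apply: Hj => _; rewrite leNgt; exact/negP.
Qed.

Lemma max_int_lower c c' k s t : 0 < t ->
  (forall x, scorec c' k x s = scorec c k x s - t) ->
  (forall j x, j != k -> scorec c' j x s = scorec c j x s) ->
  max_int c' s - max_int c s <=
  - t * Pr (pred_set (argmax_cls c) k s) + t * \sum_j Pr (tie_set c s k j t).
Proof.
move=> t0 Hk Hj.
have mCdn := measurable_clear_win c s k t.
have no_gain x : maxscore c' x s <= maxscore c x s.
  apply: fmax_le => j; have [->|jk] := eqVneq j k.
    by rewrite Hk (le_trans _ (le_maxscore c x s k)) // gerBl ltW.
  by rewrite Hj // le_maxscore.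
have loss w : clear_win c s k t w -> maxscore c' (X w) s <= maxscore c (X w) s - t.
  move=> H; apply: fmax_le => j; have [->|jk] := eqVneq j k.
    by rewrite Hk lerD2r le_maxscore.
  by rewrite Hj // (le_trans (H j jk)) // lerD2r le_maxscore.
rewrite max_int_diff.
apply: le_trans (Rintegral_le_split (a := - t) (b := 0) P (measurable_maxscore_diff c c' s)
  (maxscore_diff_bound c c' s) (mS s) mCdn _ _) _.
- by move=> w _ /loss; lra.
- by move=> w _ _; have := no_gain (X w); lra.
rewrite mul0r addr0.
have mA := measurable_pred_set k s (argmax_classifier c).
have mB : measurable (\big[setU/set0]_(j <- index_enum 'I_K) tie_set c s k j t).
  by apply: bigsetU_measurable => j _; exact: measurable_tie_set.
have mEC : measurable ([set w | S w = s] `&` clear_win c s k t) by exact: measurableI.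
have ties : Pr (\big[setU/set0]_(j <- index_enum 'I_K) tie_set c s k j t) <=
    \sum_j Pr (tie_set c s k j t).
  by apply: Pr_bigsetU_le => j; exact: measurable_tie_set.
have key : Pr (pred_set (argmax_cls c) k s) <=
    Pr ([set w | S w = s] `&` clear_win c s k t) + \sum_j Pr (tie_set c s k j t).
  apply: le_trans (Pr_mono P mA (measurableU _ _ mEC mB) (@argmax_sub_clear_win c s k t)) _.
  by apply: le_trans (Pr_setU_le P mEC mB) _; rewrite lerD2l.
have := ler_wpM2l (ltW t0) key; lra.
Qed.

Definition bump (f : 'I_K -> R) k (d : R) := fun j => f j + (if j == k then d else 0).

Definition tie_mass c s k t := \sum_j (Pr (tie_set c s j k t) + Pr (tie_set c s k j t)).

(* Moving c_k by sg * t moves score k by -s * sg * t; both signs at once. *)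
Lemma max_int_bump c k s (sg t : R) : (sg = 1 \/ sg = -1) -> 0 < t ->
  max_int (bump c k (sg * t)) s - max_int c s <=
  - (Defs.sval R s * sg) * t * Pr (pred_set (argmax_cls c) k s) + t * tie_mass c s k t.
Proof.
move=> hsg t0.
have other j x : j != k -> scorec (bump c k (sg * t)) j x s = scorec c j x s.
  by move=> jk; rewrite /scorec /bump (negbTE jk) addr0.
have moved x : scorec (bump c k (sg * t)) k x s = scorec c k x s - Defs.sval R s * sg * t.
  by rewrite /scorec /bump eqxx; ring.
have ties_in : \sum_j Pr (tie_set c s j k t) <= tie_mass c s k t.
  by apply: ler_sum => j _; rewrite lerDl; exact: Pr_ge0.
have ties_out : \sum_j Pr (tie_set c s k j t) <= tie_mass c s k t.
  by apply: ler_sum => j _; rewrite lerDr; exact: Pr_ge0.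
have [u1|u1] : Defs.sval R s * sg = 1 \/ Defs.sval R s * sg = -1.
  by case: (s); case: hsg => ->; rewrite /Defs.sval; [left|right|right|left]; ring.
- apply: le_trans (max_int_lower t0 _ other) _; first by move=> x; rewrite moved u1 mul1r.
  by rewrite u1 mulN1r lerD2l ler_wpM2l // ltW.
- apply: le_trans (max_int_raise t0 _ other) _; first by move=> x; rewrite moved u1 mulN1r opprK.
  by rewrite u1 opprK mul1r lerD2l ler_wpM2l // ltW.
Qed.

Lemma tie_mass_small c s k eta : 0 < eta ->
  \forall t \near 0^'+, tie_mass c s k t <= 2 * K%:R * eta.
Proof.
move=> eta0.
have small : \forall t \near 0^'+, forall j,
    Pr (tie_set c s j k t) <= eta /\ Pr (tie_set c s k j t) <= eta.
  by apply: filter_forall => j; near=> t; split; near: t; exact: tie_set_small.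
near=> t; apply: (@le_trans _ _ (\sum_(j < K) (eta + eta))).
  have Ht : forall j, Pr (tie_set c s j k t) <= eta /\ Pr (tie_set c s k j t) <= eta.
    by near: t; exact: small.
  by apply: ler_sum => j _; case: (Ht j) => ? ?; apply: lerD.
by rewrite sumr_const card_ord -mulr_natr; lra.
Unshelve. all: end_near. Qed.

Definition tie_const := 2 * K%:R * ((pis true)^-1 + (pis false)^-1).

Lemma tie_const_ge0 : 0 <= tie_const.
Proof. by rewrite /tie_const mulr_ge0 // addr_ge0 // invr_ge0 ltW. Qed.

Lemma Dk_pred_set g k :
  Dk P X S g k = Pr (pred_set g k true) / pis true - Pr (pred_set g k false) / pis false.
Proof. by []. Qed.

Lemma dual_part_bump c k sg eta : (sg = 1 \/ sg = -1) -> 0 < eta ->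
  \forall t \near 0^'+, dual_part (bump c k (sg * t)) - dual_part c <=
    t * (- sg * Dk P X S (argmax_cls c) k + tie_const * eta).
Proof.
move=> hsg eta0; near=> t.
have t0 : 0 < t by near: t; exact: nbhs_right_gt.
have side s : tie_mass c s k t <= 2 * K%:R * eta ->
    (max_int (bump c k (sg * t)) s - max_int c s) / pis s <=
    (- (Defs.sval R s * sg) * t * Pr (pred_set (argmax_cls c) k s) + t * (2 * K%:R * eta))
      / pis s.
  move=> Hm; rewrite ler_pM2r ?invr_gt0 //; apply: le_trans (max_int_bump c k s hsg t0) _.
  by rewrite lerD2l ler_wpM2l // ltW.
have hT : tie_mass c true k t <= 2 * K%:R * eta by near: t; exact: tie_mass_small.
have hF : tie_mass c false k t <= 2 * K%:R * eta by near: t; exact: tie_mass_small.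
have -> : dual_part (bump c k (sg * t)) - dual_part c =
    (max_int (bump c k (sg * t)) true - max_int c true) / pis true +
    (max_int (bump c k (sg * t)) false - max_int c false) / pis false.
  by rewrite /dual_part; ring.
apply: le_trans (lerD (side true hT) (side false hF)) _.
by rewrite Dk_pred_set /tie_const /Defs.sval le_eqVlt; apply/orP; left; apply/eqP; ring.
Unshelve. all: end_near. Qed.

Lemma Hdual_bump eps (l1 l2 : 'I_K -> R) k (a1 a2 t : R) :
  Hdual P X S eps p (bump l1 k (a1 * t)) (bump l2 k (a2 * t)) =
  dual_part (bump (fun j => l1 j - l2 j) k ((a1 - a2) * t))
  + eps * (\sum_j (l1 j + l2 j) + (a1 + a2) * t).
Proof.
rewrite Hdual_decomp; congr (dual_part _ + eps * _).
  by apply/funext => j; rewrite /bump; case: (j == k); ring.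
rewrite (eq_bigr (fun j => (l1 j + l2 j) + (if j == k then (a1 + a2) * t else 0))).
  by rewrite big_split /= -big_mkcond big_pred1_eq.
by move=> j _; rewrite /bump; case: (j == k); ring.
Qed.

Lemma first_order_cond (l1 l2 : 'I_K -> R) eps k (a1 a2 rho : R) :
  (a1 - a2 = 1 \/ a1 - a2 = -1) -> 0 < rho ->
  (forall t, 0 < t -> t <= rho ->
     Hdual P X S eps p l1 l2 <= Hdual P X S eps p (bump l1 k (a1 * t)) (bump l2 k (a2 * t))) ->
  0 <= - (a1 - a2) * Dk P X S (argmax_cls (fun j => l1 j - l2 j)) k + eps * (a1 + a2).
Proof.
move=> hsg rho0 Hmin; pose c := fun j => l1 j - l2 j.
apply: (ge0_up_to_eps tie_const_ge0) => eta eta0.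
have [t [[t0 trho] Ht]] : exists t, (0 < t /\ t <= rho) /\
    dual_part (bump c k ((a1 - a2) * t)) - dual_part c <=
    t * (- (a1 - a2) * Dk P X S (argmax_cls c) k + tie_const * eta).
  apply: (@filter_ex _ _ (at_right_proper_filter (0:R))); near=> t; split; [split|].
  - by near: t; exact: nbhs_right_gt.
  - by near: t; exact: nbhs_right_le.
  - by near: t; exact: dual_part_bump.
have := Hmin t t0 trho; rewrite Hdual_bump Hdual_decomp -/c => Hd.
have : 0 <= t * (- (a1 - a2) * Dk P X S (argmax_cls c) k + eps * (a1 + a2) + tie_const * eta).
  by move: Hd Ht; move: (dual_part _) (dual_part c) (Dk _ _ _ _ _) => g1 g0 d; lra.
by rewrite pmulr_rge0.
Unshelve. all: end_near. Qed.

Lemma kkt (l1 l2 : 'I_K -> R) eps :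
  (forall k, 0 <= l1 k) -> (forall k, 0 <= l2 k) ->
  (forall m1 m2 : 'I_K -> R, (forall k, 0 <= m1 k) -> (forall k, 0 <= m2 k) ->
     Hdual P X S eps p l1 l2 <= Hdual P X S eps p m1 m2) ->
  forall k, let D := Dk P X S (argmax_cls (fun j => l1 j - l2 j)) k in
  `|D| <= eps /\ l1 k * (D - eps) = 0 /\ l2 k * (- D - eps) = 0.
Proof.
move=> l10 l20 Hmin k D.
have bump_ge0 (f : 'I_K -> R) a : (forall j, 0 <= f j) -> 0 <= f k + a ->
    forall j, 0 <= bump f k a j.
  move=> f0 fk j; rewrite /bump; case: eqP => [->//|_]; rewrite addr0; exact: f0.
have dir a1 a2 rho : a1 - a2 = 1 \/ a1 - a2 = -1 -> 0 < rho ->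
    (forall t, 0 < t -> t <= rho -> 0 <= l1 k + a1 * t /\ 0 <= l2 k + a2 * t) ->
    0 <= - (a1 - a2) * D + eps * (a1 + a2).
  move=> hsg rho0 adm; apply: first_order_cond hsg rho0 _ => t t0 trho.
  by case: (adm t t0 trho) => h1 h2; apply: Hmin; exact: bump_ge0.
have upper : 0 <= - D + eps.
  have := @dir 1 0 1 (or_introl (subr0 _)) ltr01; rewrite subr0 addr0 mulr1 mulN1r.
  by apply=> t t0 _; rewrite mul1r mul0r addr0; split; [rewrite addr_ge0 // ltW|].
have lower : 0 <= D + eps.
  have := @dir 0 1 1 (or_intror (sub0r _)) ltr01; rewrite sub0r opprK mul1r add0r mulr1.
  by apply=> t t0 _; rewrite mul1r mul0r addr0; split; [|rewrite addr_ge0 // ltW].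
have slack1 : 0 < l1 k -> 0 <= D - eps.
  move=> lk; have := @dir (-1) 0 (l1 k) (or_intror (subr0 _)) lk.
  rewrite subr0 opprK mul1r addr0 mulrN1; apply=> t t0 tl.
  by rewrite mulN1r mul0r addr0 subr_ge0.
have slack2 : 0 < l2 k -> 0 <= - D - eps.
  move=> lk; have := @dir 0 (-1) (l2 k) (or_introl (etrans (sub0r _) (opprK 1))) lk.
  rewrite sub0r opprK mulN1r add0r mulrN1; apply=> t t0 tl.
  by rewrite mulN1r mul0r addr0 subr_ge0.
split; first by rewrite ler_norml; apply/andP; split; lra.
split.
- have [lk|lk] := ltrP 0 (l1 k).
    by have := slack1 lk => h; rewrite (_ : D - eps = 0) ?mulr0 //; lra.
  by rewrite (_ : l1 k = 0) ?mul0r //; apply/eqP; rewrite eq_le lk l10.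
- have [lk|lk] := ltrP 0 (l2 k).
    by have := slack2 lk => h; rewrite (_ : - D - eps = 0) ?mulr0 //; lra.
  by rewrite (_ : l2 k = 0) ?mul0r //; apply/eqP; rewrite eq_le lk l20.
Qed.

Definition score_gap c k s w := maxscore c (X w) s - scorec c k (X w) s.

Lemma score_gap_ge0 c k s w : 0 <= score_gap c k s w.
Proof. by rewrite subr_ge0 le_maxscore. Qed.

Lemma measurable_score_gap c k s : measurable_fun setT (score_gap c k s).
Proof.
by apply: measurable_realfun.measurable_funB; [exact: measurable_maxscoreX|exact: measurable_scoreX].
Qed.

Lemma score_gap_bound c k s w : `|score_gap c k s w| <= score_bound c s + score_bound c s.
Proof.
by apply: (le_trans (ler_normB _ _)); apply: lerD; [exact: maxscore_bound|exact: scorec_bound].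
Qed.

Lemma score_gap_zero g c s : classifier g -> picked_int g c s = max_int c s ->
  forall k, \int[P]_(w in pred_set g k s) score_gap c k s w = 0.
Proof.
move=> cg HJ.
have gap_sum : \sum_k \int[P]_(w in pred_set g k s) score_gap c k s w = 0.
  rewrite (eq_bigr (fun k => \int[P]_(w in pred_set g k s) maxscore c (X w) s -
                          \int[P]_(w in pred_set g k s) scorec c k (X w) s)).
    rewrite sumrB -/(picked_int g c s) HJ /max_int.
    by rewrite (Rintegral_pred_sets _ cg (measurable_maxscoreX c s)
      (fun w => maxscore_bound c (X w) s)) subrr.
  move=> k _; rewrite RintegralB //; first exact: measurable_pred_set.
  - exact: (bounded_integrable P (measurable_maxscoreX c s) (fun w => maxscore_bound c (X w) s))
      (measurable_pred_set k s cg).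
  - exact: (bounded_integrable P (measurable_scoreX c k s) (fun w => scorec_bound c k (X w) s))
      (measurable_pred_set k s cg).
move=> k; apply: (psumr_eq0P _ gap_sum) => // i _.
by apply: Rintegral_ge0 => w _; exact: score_gap_ge0.
Qed.

Lemma pred_set_sub_ties g c s k d :
  pred_set g k s `<=` pred_set (argmax_cls c) k s `|`
    ((pred_set g k s `&` [set w | d <= score_gap c k s w]) `|`
     \big[setU/set0]_(j <- index_enum 'I_K) tie_set c s j k d).
Proof.
move=> w Aw; have [E|jk] := eqVneq (argmax_cls c (X w) s) k.
  by left; case: Aw => _ Sw; split => //; rewrite Sw.
have [Hc|Hc] := pselect (d <= score_gap c k s w); first by right; left.
right; right; apply/in_bigsetU; exists (argmax_cls c (X w) s); first exact: mem_index_enum.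
case: Aw => _ Sw; split => //; split => //; rewrite -maxscore_argmax; split.
  by move/negP: Hc; rewrite -ltNge /score_gap; lra.
exact: le_maxscore.
Qed.

(* A classifier with no expected gap predicts k at most as often as the
   canonical classifier: the continuity assumption rules out ties. *)
Lemma Pr_pred_set_le g c s k : classifier g ->
  \int[P]_(w in pred_set g k s) score_gap c k s w = 0 ->
  Pr (pred_set g k s) <= Pr (pred_set (argmax_cls c) k s).
Proof.
move=> cg gap0; rewrite -subr_ge0; apply: (@ge0_up_to_eps _ _ K%:R) => // eta eta0.
have [d [d0 Hd]] : exists d, 0 < d /\ forall j, Pr (tie_set c s j k d) <= eta.
  have small : \forall t \near 0^'+, forall j, Pr (tie_set c s j k t) <= eta.
    by apply: filter_forall => j; exact: tie_set_small.
  apply: (@filter_ex _ _ (at_right_proper_filter (0:R))); near=> t; split.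
  - by near: t; exact: nbhs_right_gt.
  - by near: t; exact: small.
pose Z := pred_set g k s `&` [set w | d <= score_gap c k s w].
have mA := measurable_pred_set k s cg.
have mC : measurable [set w | d <= score_gap c k s w].
  apply: measurable_bool; apply: measurable_realfun.measurable_fun_ler.
    exact: measurable_cst.
  exact: measurable_score_gap.
have mZ : measurable Z by exact: measurableI.
have PZ : Pr Z <= 0.
  have := Rintegral_ge_split (a := d) (b := 0) P (measurable_score_gap c k s)
    (@score_gap_bound c k s) mA mC (fun w _ H => H) (fun w _ _ => score_gap_ge0 c k s w).
  by rewrite gap0 mul0r addr0 -/Z => H; rewrite -(pmulr_rle0 _ d0).
have mA' := measurable_pred_set k s (argmax_classifier c).
have mB : measurable (\big[setU/set0]_(j <- index_enum 'I_K) tie_set c s j k d).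
  by apply: bigsetU_measurable => j _; exact: measurable_tie_set.
rewrite addrAC subr_ge0.
apply: le_trans (Pr_mono P mA (measurableU _ _ mA' (measurableU _ _ mZ mB))
  (@pred_set_sub_ties g c s k d)) _.
apply: le_trans (Pr_setU_le P mA' (measurableU _ _ mZ mB)) _; rewrite lerD2l.
apply: le_trans (Pr_setU_le P mZ mB) _; rewrite -[X in _ <= X]add0r; apply: lerD => //.
apply: le_trans (Pr_bigsetU_le P _ (fun j => measurable_tie_set c s j k d)) _.
by apply: le_trans (ler_sum _ (fun j _ => Hd j)) _; rewrite sumr_const card_ord mulr_natl.
Unshelve. all: end_near. Qed.

Lemma pred_mass_eq g c s : classifier g -> picked_int g c s = max_int c s ->
  forall k, Pr (pred_set g k s) = Pr (pred_set (argmax_cls c) k s).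
Proof.
move=> cg HJ; apply: eq_of_le_sum => [k|].
  exact: Pr_pred_set_le cg (score_gap_zero cg HJ k).
by rewrite -!Pr_pred_sets //; exact: argmax_classifier.
Qed.

Lemma picked_eq_max_of_primal g c : classifier g -> primal_part g c = dual_part c ->
  forall s, picked_int g c s = max_int c s.
Proof.
move=> cg; rewrite /primal_part /dual_part => E s.
have le s' : picked_int g c s' / pis s' <= max_int c s' / pis s'.
  by rewrite ler_pM2r ?invr_gt0 //; exact: picked_le_max.
have eq s' : picked_int g c s' / pis s' = max_int c s' / pis s'.
  by have := le true; have := le false; case: s'; lra.
by move/(congr1 (fun x => x * pis s)): (eq s); rewrite !divfK ?lt0r_neq0.
Qed.

Lemma fair_risk_le_risk g (l1 l2 : 'I_K -> R) eps :
  (forall k, 0 <= l1 k) -> (forall k, 0 <= l2 k) -> eps_fair P X S eps g ->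
  fair_risk P X S Y eps l1 l2 g <= risk P X S Y g.
Proof.
move=> l10 l20 fg; rewrite /fair_risk.
have S1 : \sum_k l1 k * (Dk P X S g k - eps) <= 0.
  apply: sumr_le0 => k _; apply: mulr_ge0_le0 => //.
  by rewrite subr_le0; apply: le_trans (ler_norm _) (fg k).
have S2 : \sum_k l2 k * (- Dk P X S g k - eps) <= 0.
  apply: sumr_le0 => k _; apply: mulr_ge0_le0 => //.
  by rewrite subr_le0; apply: le_trans (fg k); rewrite -normrN ler_norm.
lra.
Qed.

Lemma fair_risk_eq_risk g (l1 l2 : 'I_K -> R) eps :
  (forall k, l1 k * (Dk P X S g k - eps) = 0) -> (forall k, l2 k * (- Dk P X S g k - eps) = 0) ->
  fair_risk P X S Y eps l1 l2 g = risk P X S Y g.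
Proof.
move=> H1 H2; rewrite /fair_risk.
by rewrite big1 => [|k _]; [rewrite big1 => [|k _] //; rewrite !addr0|].
Qed.

Section AtDualMinimiser.
Variables (eps : R) (l1 l2 : 'I_K -> R).
Hypotheses (l10 : forall k, 0 <= l1 k) (l20 : forall k, 0 <= l2 k)
  (Hmin : forall m1 m2 : 'I_K -> R, (forall k, 0 <= m1 k) -> (forall k, 0 <= m2 k) ->
     Hdual P X S eps p l1 l2 <= Hdual P X S eps p m1 m2).

Local Notation c := (fun j => l1 j - l2 j).
Local Notation gstar := (argmax_cls (fun j => l1 j - l2 j)).

Local Notation fair_optimal g := (eps_fair P X S eps g /\
  forall g', classifier g' -> eps_fair P X S eps g' -> risk P X S Y g <= risk P X S Y g').

Lemma argmax_fair : eps_fair P X S eps gstar.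
Proof. by move=> k; case: (kkt l10 l20 Hmin k). Qed.

Lemma argmax_risk : risk P X S Y gstar = 1 - Hdual P X S eps p l1 l2.
Proof.
rewrite -(fair_risk_argmax l1 l2 eps) fair_risk_eq_risk // => k.
all: by case: (kkt l10 l20 Hmin k) => _ [].
Qed.

Lemma argmax_optimal : fair_optimal gstar.
Proof.
split; first exact: argmax_fair.
move=> g cg fg; rewrite argmax_risk; apply: le_trans (weak_duality l1 l2 eps cg) _.
exact: fair_risk_le_risk.
Qed.

Lemma fair_optimal_fair_risk_min gs : classifier gs -> fair_optimal gs ->
  forall g, classifier g -> fair_risk P X S Y eps l1 l2 gs <= fair_risk P X S Y eps l1 l2 g.
Proof.
move=> cg [fgs Hopt] g cg'.
apply: le_trans (fair_risk_le_risk l10 l20 fgs) _.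
apply: le_trans (Hopt _ (argmax_classifier c) argmax_fair) _.
by rewrite argmax_risk; exact: weak_duality.
Qed.

(* A minimiser of the fair risk attains the dual bound, hence predicts like
   the canonical classifier; so it is eps-fair and its risk is optimal. *)
Lemma fair_risk_min_fair_optimal gs : classifier gs ->
  (forall g, classifier g -> fair_risk P X S Y eps l1 l2 gs <= fair_risk P X S Y eps l1 l2 g) ->
  fair_optimal gs.
Proof.
move=> cg Hfr.
have attained : fair_risk P X S Y eps l1 l2 gs = 1 - Hdual P X S eps p l1 l2.
  apply/eqP; rewrite eq_le weak_duality // andbT.
  by rewrite -(fair_risk_argmax l1 l2 eps); apply: Hfr; exact: argmax_classifier.
have same_D k : Dk P X S gs k = Dk P X S gstar k.
  have primal_eq : primal_part gs c = dual_part c.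
    by move: attained; rewrite fair_risk_decomp // Hdual_decomp; lra.
  have HJ := picked_eq_max_of_primal cg primal_eq.
  by rewrite !Dk_pred_set !(pred_mass_eq cg (HJ _)).
have fgs : eps_fair P X S eps gs by move=> k; rewrite same_D; exact: argmax_fair.
split => // g cg' fg.
rewrite -(fair_risk_eq_risk (l1 := l1) (l2 := l2) (eps := eps)).
- by rewrite attained -argmax_risk; exact: (argmax_optimal.2).
- by move=> k; rewrite same_D; case: (kkt l10 l20 Hmin k) => _ [].
- by move=> k; rewrite same_D; case: (kkt l10 l20 Hmin k) => _ [].
Qed.

Lemma maximiser_fair_optimal gs : classifier gs ->
  (forall x s k, score P S p l1 l2 k x s <= score P S p l1 l2 (gs x s) x s) ->
  fair_optimal gs.
Proof.
move=> cg gmax; apply: fair_risk_min_fair_optimal => // g cg'.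
by rewrite fair_risk_maximiser //; exact: weak_duality.
Qed.

End AtDualMinimiser.

End Model.

Unset Implicit Arguments.
Set Strict Implicit.

Theorem proposition2 (R : realType) (dO : measure_display) (Om : measurableType dO)
  (P : probability Om R) (dX : measure_display) (T : measurableType dX)
  (X : Om -> T) (S : Om -> bool) (K : nat) (Y : Om -> 'I_K)
  (p : 'I_K -> T -> bool -> R) (eps : R) (l1 l2 : 'I_K -> R) :
  measurable_fun setT X ->
  (forall s : bool, measurable [set w | S w = s]) ->
  (forall k : 'I_K, measurable [set w | Y w = k]) ->
  (forall s : bool, 0 < piS P S s) ->
  is_cond_prob P X S Y p ->
  0 <= eps ->
  continuity_assumption P X S p ->
  (forall k, 0 <= l1 k) -> (forall k, 0 <= l2 k) ->
  (forall m1 m2 : 'I_K -> R, (forall k, 0 <= m1 k) -> (forall k, 0 <= m2 k) ->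
     Hdual P X S eps p l1 l2 <= Hdual P X S eps p m1 m2) ->
  (forall gs : T -> bool -> 'I_K, classifier gs ->
     ((eps_fair P X S eps gs /\
       forall g, classifier g -> eps_fair P X S eps g ->
         risk P X S Y gs <= risk P X S Y g)
      <->
      (forall g, classifier g ->
         fair_risk P X S Y eps l1 l2 gs <= fair_risk P X S Y eps l1 l2 g)))
  /\
  (forall gs : T -> bool -> 'I_K, classifier gs ->
     (forall x s k, score P S p l1 l2 k x s <= score P S p l1 l2 (gs x s) x s) ->
     eps_fair P X S eps gs /\
     forall g, classifier g -> eps_fair P X S eps g ->
       risk P X S Y gs <= risk P X S Y g).
Proof.
move=> mX mS mY pi0 cp _ cont l10 l20 Hmin.
(* The sample space is inhabited (it has probability one), so K > 0. *)
have [w0 _] : exists w : Om, True.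
  apply: contrapT => empty.
  have : P setT = 0%E.
    by rewrite (_ : setT = set0) ?measure0 //; apply/seteqP; split => // w _; apply: empty; exists w.
  by rewrite probability_setT => /eqP; rewrite onee_eq0.
have k0 := Y w0.
split=> gs cg; first split.
- exact (fair_optimal_fair_risk_min k0 mX mS mY pi0 cp cont l10 l20 Hmin cg).
- exact (fair_risk_min_fair_optimal k0 mX mS mY pi0 cp cont l10 l20 Hmin cg).
- exact (maximiser_fair_optimal k0 mX mS mY pi0 cp cont l10 l20 Hmin cg).
Qed.
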